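(* Suppose that for every $j\ge 0$ the map $F_j$ is nondecreasing in its first argument on $V^k$. Then for every $m\ge 0$, the maps $F_m$ and $F_{m+1}$ have the same fixed points.
   Context: Let $k\ge 2$ be an integer, $V\subseteq\mathbb{R}$ an interval, and $F_0:V^k\to V$ a map. Define maps $F_m:V^k\to V$ recursively by $$F_{m+1}(u_1,\dots,u_k)=F_m\big(F_0(u_1,\dots,u_k),u_1,\dots,u_{k-1}\big),\qquad m\ge 0.$$ A fixed point of $F_m$ is a point $x\in V$ with $F_m(x,\dots,x)=x$. *)

From mathcomp Require Import all_boot.
From Stdlib Require Import Reals.
Set Implicit Arguments. Unset Strict Implicit.

Open Scope R_scope.

Definition is_interval (V : R -> Prop) : Prop :=
  forall x y z, V x -> V z -> x <= y -> y <= z -> V y.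

Definition inVk (k : nat) (V : R -> Prop) (u : 'I_k -> R) : Prop :=
  forall i, V (u i).

(* shift a x u = (x, u_1, ..., u_{k-1}) *)
Definition shift (k : nat) (x : R) (u : 'I_k -> R) : 'I_k -> R :=
  fun i => match nat_of_ord i with
           | 0%N => x
           | j.+1 => match (ltnP j k) with
                     | LtnNotGeq Hj => u (Ordinal Hj)
                     | GeqNotLtn _ => x (* unreachable *)
                     end
           end.

Fixpoint Fiter (k : nat) (F0 : ('I_k -> R) -> R) (m : nat) : ('I_k -> R) -> R :=
  match m with
  | 0%N => F0
  | m'.+1 => fun u => Fiter F0 m' (shift (F0 u) u)
  end.

Definition diag (k : nat) (x : R) : 'I_k -> R := fun _ => x.

Definition is_fixed_point (k : nat) (V : R -> Prop) (G : ('I_k -> R) -> R) (x : R) : Prop :=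
  V x /\ G (@diag k x) = x.

Definition nondecr_first (k : nat) (V : R -> Prop) (G : ('I_k -> R) -> R) : Prop :=
  forall u w : 'I_k -> R, inVk V u -> inVk V w ->
    (forall i : 'I_k, (nat_of_ord i <> 0)%nat -> u i = w i) ->
    (forall i : 'I_k, (nat_of_ord i = 0)%nat -> u i <= w i) ->
    G u <= G w.

(* Evaluated at a diagonal point (x, ..., x), the iterates F_0, F_1, ...
   move monotonically away from x in the direction of F_0(x, ..., x) - x:
   since F_n is nondecreasing in its first argument,
   F_{n+1}(x, ..., x) = F_n(F_0(x, ..., x), x, ..., x) lies on the same side of
   F_n(x, ..., x) as F_0(x, ..., x) lies of x.  Hence x is a fixed point of some
   (equivalently, of every) F_m exactly when it is a fixed point of F_0. *)

From mathcomp Require Import all_boot.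
From Stdlib Require Import Reals Lra FunctionalExtensionality.
Set Implicit Arguments. Unset Strict Implicit.
Open Scope R_scope.

Lemma shift_ord0 (k : nat) (y : R) (u : 'I_k -> R) (i : 'I_k) :
  nat_of_ord i = 0%nat -> shift y u i = y.
Proof. by rewrite /shift => ->. Qed.

Lemma shift_first_irrelevant (k : nat) (y z : R) (u : 'I_k -> R) (i : 'I_k) :
  nat_of_ord i <> 0%nat -> shift y u i = shift z u i.
Proof.
  rewrite /shift; case: i => [[|j] Hj] //= _.
  by case: ltnP => // Hjk; rewrite leqNgt (ltnW Hj) in Hjk.
Qed.

Lemma shift_inVk (k : nat) (V : R -> Prop) (y : R) (u : 'I_k -> R) :
  V y -> inVk V u -> inVk V (shift y u).
Proof.
  move=> Vy Vu i; rewrite /shift; case: i => [[|j] Hj] //=.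
  by case: ltnP.
Qed.

Lemma shift_diag (k : nat) (x : R) : shift x (@diag k x) = diag x.
Proof.
  apply: functional_extensionality => i; rewrite /shift /diag.
  by case: i => [[|j] Hj] //=; case: ltnP.
Qed.

Lemma Fiter_diag_fixed (k : nat) (F0 : ('I_k -> R) -> R) (x : R) :
  F0 (diag x) = x -> forall m, Fiter F0 m (diag x) = x.
Proof. by move=> F0x; elim=> [|m IHm] //=; rewrite F0x shift_diag. Qed.

Section MonotoneIterates.

Variables (k : nat) (V : R -> Prop) (F0 : ('I_k -> R) -> R).
Hypothesis F0_in : forall u, inVk V u -> V (F0 u).
Hypothesis Fiter_nondecr : forall j, nondecr_first V (Fiter F0 j).

Lemma Fiter_shift_le (m : nat) (u : 'I_k -> R) (y z : R) :
  inVk V u -> V y -> V z -> y <= z ->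
  Fiter F0 m (shift y u) <= Fiter F0 m (shift z u).
Proof.
  move=> Vu Vy Vz yz; apply: Fiter_nondecr; try exact: shift_inVk.
  - exact: shift_first_irrelevant.
  - by move=> i i0; rewrite !shift_ord0.
Qed.

Lemma Fiter_diag_le_F0 (x : R) :
  V x -> F0 (diag x) <= x -> forall n, Fiter F0 n (diag x) <= F0 (diag x).
Proof.
  move=> Vx F0x_le; have Vd : inVk V (@diag k x) by [].
  elim=> [|n IHn] /=; first lra.
  have := Fiter_shift_le n Vd (F0_in Vd) Vx F0x_le.
  rewrite shift_diag; lra.
Qed.

Lemma Fiter_diag_ge_F0 (x : R) :
  V x -> x <= F0 (diag x) -> forall n, F0 (diag x) <= Fiter F0 n (diag x).
Proof.
  move=> Vx F0x_ge; have Vd : inVk V (@diag k x) by [].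
  elim=> [|n IHn] /=; first lra.
  have := Fiter_shift_le n Vd Vx (F0_in Vd) F0x_ge.
  rewrite shift_diag; lra.
Qed.

Lemma Fiter_diag_fixedE (m : nat) (x : R) :
  V x -> Fiter F0 m (diag x) = x <-> F0 (diag x) = x.
Proof.
  move=> Vx; split=> [Fmx | ]; last by move/Fiter_diag_fixed.
  case: (Rtotal_order (F0 (diag x)) x) => [lt_F0x | [-> // | gt_F0x]].
  - have := Fiter_diag_le_F0 Vx (Rlt_le _ _ lt_F0x) m; lra.
  - have := Fiter_diag_ge_F0 Vx (Rlt_le _ _ gt_F0x) m; lra.
Qed.

End MonotoneIterates.

Theorem mainTheorem2 (k : nat) (V : R -> Prop) (F0 : ('I_k -> R) -> R) :
  (2 <= k)%nat ->
  is_interval V ->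
  (forall u, inVk V u -> V (F0 u)) ->
  (forall j : nat, nondecr_first V (Fiter F0 j)) ->
  forall m : nat, forall x : R,
    is_fixed_point V (Fiter F0 m) x <-> is_fixed_point V (Fiter F0 m.+1) x.
Proof.
  move=> _ _ F0_in Fiter_nondecr m x.
  split=> -[Vx Fx]; split=> //.
  all: have fixedE n := Fiter_diag_fixedE F0_in Fiter_nondecr n Vx.
  all: by rewrite fixedE; rewrite fixedE in Fx.
Qed.
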